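(* Let $R$ be a commutative noetherian ring and $\mathfrak{a}$ an ideal contained in the Jacobson radical of $R$. Then $R$ is $\mathfrak{a}$-adically complete if and only if the $\mathfrak{a}$-adic completion $\widehat{R}^{\mathfrak{a}}$ is a finitely generated $R$-module.
   Context: A module $M$ is $\mathfrak{a}$-adically complete if the natural map $M\to \widehat{M}^{\mathfrak{a}}=\varprojlim_n M/\mathfrak{a}^nM$ is an isomorphism. *)

From HB Require Import structures.
From mathcomp Require Import all_boot all_algebra.
Set Implicit Arguments. Unset Strict Implicit. Unset Printing Implicit Defensive.
Import GRing.Theory.
Local Open Scope ring_scope.

Section CommAlg.
Variable R : comPzRingType.

Definition is_ideal (I : R -> Prop) : Prop :=
  [/\ I 0, (forall x y, I x -> I y -> I (x + y)) & (forall r x, I x -> I (r * x))].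

Definition in_ideal_gen (s : seq R) (x : R) : Prop :=
  exists c : 'I_(size s) -> R, x = \sum_(i < size s) c i * s`_i.

Definition fg_ideal (I : R -> Prop) : Prop :=
  exists s : seq R, forall x, I x <-> in_ideal_gen s x.

Definition noetherian : Prop := forall I, is_ideal I -> fg_ideal I.

Definition proper_ideal (I : R -> Prop) : Prop := is_ideal I /\ ~ I 1.

Definition maximal_ideal (m : R -> Prop) : Prop :=
  proper_ideal m /\
  forall J, proper_ideal J -> (forall x, m x -> J x) -> forall x, J x -> m x.

Definition jacobson_radical (x : R) : Prop :=
  forall m, maximal_ideal m -> m x.

Definition ideal_mul (I J : R -> Prop) (x : R) : Prop :=
  exists (k : nat) (u v : 'I_k -> R),
    [/\ forall i, I (u i), forall i, J (v i) & x = \sum_(i < k) u i * v i].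

Fixpoint ideal_pow (a : R -> Prop) (n : nat) : R -> Prop :=
  match n with
  | 0 => fun _ => True
  | n'.+1 => ideal_mul a (ideal_pow a n')
  end.

(* The a-adic completion  lim_n R/a^n R  is represented as a setoid:
   an element is a sequence (x_n) of representatives x_n of classes in R/a^n
   compatible with the projections R/a^(n+1) -> R/a^n, and two such
   sequences are identified when x_n = y_n mod a^n for all n. *)
Definition compat_seq (a : R -> Prop) (x : nat -> R) : Prop :=
  forall n, ideal_pow a n (x n.+1 - x n).

Definition compl_eq (a : R -> Prop) (x y : nat -> R) : Prop :=
  forall n, ideal_pow a n (x n - y n).

Definition compl_of (r : R) : nat -> R := fun _ => r.

Definition adically_complete (a : R -> Prop) : Prop :=
  (forall r s, compl_eq a (compl_of r) (compl_of s) -> r = s) /\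
  (forall x, compat_seq a x -> exists r, compl_eq a (compl_of r) x).

Definition completion_fg (a : R -> Prop) : Prop :=
  exists (k : nat) (g : 'I_k -> nat -> R),
    (forall i, compat_seq a (g i)) /\
    forall x, compat_seq a x ->
      exists c : 'I_k -> R, compl_eq a x (fun n => \sum_(i < k) c i * g i n).

End CommAlg.

(* (=>) The completion is generated by the image of 1.
   (<=) Injectivity of R -> lim R/a^n is the Krull intersection theorem: with
   K = \bigcap_n a^n, an ideal c maximal among those with c :&: K <= aK contains aK
   and, since the colon ideals c : x^j stabilise, a power of every x in a, hence a
   power of a; thus K = aK, and Nakayama's lemma (a lies in the Jacobson radical)
   gives K = 0. For surjectivity, write each generator of the completion as
   g_i = r_i + sum_j s_j z_ij with s_j generating a, and expand the z_ij back in
   the g_l: this gives (1 - B) g = r with B over a. Since det (1 - B) = 1 mod a is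
   a unit, every g_i, hence every element of the completion, comes from R. *)

From Pilot Require Import Defs.
From mathcomp Require Import all_boot all_algebra fingroup perm.
From Stdlib Require Import Classical ClassicalEpsilon.
Set Implicit Arguments. Unset Strict Implicit. Unset Printing Implicit Defensive.
Import GRing.Theory.
Local Open Scope ring_scope.

Section Ideals.
Variable R : comPzRingType.
Implicit Types (I J a c : R -> Prop) (s t : seq R).

Lemma ideal0 I : is_ideal I -> I 0. Proof. by case. Qed.

Lemma idealD I x y : is_ideal I -> I x -> I y -> I (x + y).
Proof. by case=> _ + _; apply. Qed.

Lemma idealMl I r x : is_ideal I -> I x -> I (r * x).
Proof. by case=> _ _; apply. Qed.

Lemma idealMr I r x : is_ideal I -> I x -> I (x * r).
Proof. by rewrite mulrC; apply: idealMl. Qed.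

Lemma idealN I x : is_ideal I -> I x -> I (- x).
Proof. by rewrite -mulN1r; apply: idealMl. Qed.

Lemma idealB I x y : is_ideal I -> I x -> I y -> I (x - y).
Proof. by move=> hI hx hy; apply: idealD => //; apply: idealN. Qed.

Lemma idealBC I x y : is_ideal I -> I (x - y) -> I (y - x).
Proof. by move=> hI hxy; rewrite -opprB; apply: idealN. Qed.

Lemma ideal_sum I (T : Type) (r : seq T) (P : pred T) (F : T -> R) :
  is_ideal I -> (forall i, P i -> I (F i)) -> I (\sum_(i <- r | P i) F i).
Proof. by move=> hI hF; apply: (big_ind I) => //; [apply: ideal0 | move=> x y; apply: idealD]. Qed.

Lemma is_ideal_ext I J : (forall y, I y <-> J y) -> is_ideal J -> is_ideal I.
Proof.
move=> eIJ [J0 JD JM]; split; first by apply/eIJ.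
- by move=> x y /eIJ hx /eIJ hy; apply/eIJ/JD.
- by move=> r x /eIJ hx; apply/eIJ/JM.
Qed.

Lemma is_ideal_mul I J : is_ideal I -> is_ideal (ideal_mul I J).
Proof.
move=> hI; split.
- by exists 0%N, (fun _ => 0), (fun _ => 0); split; [case | case | rewrite big_ord0].
- move=> _ _ [k1 [u1 [v1 [hu1 hv1 ->]]]] [k2 [u2 [v2 [hu2 hv2 ->]]]].
  pose w (f1 : 'I_k1 -> R) (f2 : 'I_k2 -> R) i :=
    match split i with inl j => f1 j | inr j => f2 j end.
  exists (k1 + k2)%N, (w u1 u2), (w v1 v2); split; try by move=> i; rewrite /w; case: split.
  by rewrite big_split_ord /w; congr (_ + _); apply: eq_bigr => i _;
    [rewrite (unsplitK (inl i)) | rewrite (unsplitK (inr i))].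
- move=> r _ [k [u [v [hu hv ->]]]]; exists k, (fun i => r * u i), v; split => //.
  + by move=> i; apply: idealMl.
  + by rewrite mulr_sumr; apply: eq_bigr => i _; rewrite mulrA.
Qed.

Lemma ideal_mulC I J y : ideal_mul I J y -> ideal_mul J I y.
Proof.
move=> [k [u [v [hu hv ->]]]]; exists k, v, u; split => //.
by apply: eq_bigr => i _; rewrite mulrC.
Qed.

Lemma ideal_mul_subr I J y : is_ideal J -> ideal_mul I J y -> J y.
Proof. by move=> hJ [k [u [v [_ hv ->]]]]; apply: ideal_sum => // i _; apply: idealMl. Qed.

Lemma ideal_mul_subl I J y : is_ideal I -> ideal_mul I J y -> I y.
Proof. by move=> hI /ideal_mulC; apply: ideal_mul_subr. Qed.

Lemma ideal_mul_mem I J x y : I x -> J y -> ideal_mul I J (x * y).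
Proof. by move=> hx hy; exists 1%N, (fun _ => x), (fun _ => y); rewrite big_ord1. Qed.

Lemma is_ideal_pow a n : is_ideal a -> is_ideal (ideal_pow a n).
Proof. by case: n => [|n] ha; [split | apply: is_ideal_mul]. Qed.

Lemma in_ideal_gen_nth s (i : 'I_(size s)) : in_ideal_gen s s`_i.
Proof.
exists (fun j => (j == i)%:R); rewrite (bigD1 i) //= eqxx mul1r big1 ?addr0 //.
by move=> j /negbTE ->; rewrite mul0r.
Qed.

Lemma in_ideal_gen_sub s J y : is_ideal J -> (forall i : 'I_(size s), J s`_i) ->
  in_ideal_gen s y -> J y.
Proof. by move=> hJ hs [c ->]; apply: ideal_sum => // i _; apply: idealMl. Qed.

Lemma is_ideal_gen s : is_ideal (in_ideal_gen s).
Proof.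
split.
- by exists (fun _ => 0); rewrite big1 // => i _; rewrite mul0r.
- move=> _ _ [c1 ->] [c2 ->]; exists (fun i => c1 i + c2 i).
  by rewrite -big_split; apply: eq_bigr => i _; rewrite mulrDl.
- move=> r _ [c ->]; exists (fun i => r * c i).
  by rewrite mulr_sumr; apply: eq_bigr => i _; rewrite mulrA.
Qed.

Lemma ideal_mul_genl s I J y : (forall z, I z <-> in_ideal_gen s z) ->
  is_ideal J -> ideal_mul I J y ->
  exists w : 'I_(size s) -> R, (forall l, J (w l)) /\ y = \sum_(l < size s) s`_l * w l.
Proof.
move=> hI hJ [k [u [v [/(_ _)/hI hu hv ->]]]].
have /choice[cf hcf] := hu; rewrite /in_ideal_gen in hcf.
exists (fun l => \sum_j cf j l * v j); split.
- by move=> l; apply: ideal_sum => // j _; apply: idealMl.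
- under eq_bigr => j _ do rewrite hcf mulr_suml.
  rewrite exchange_big /=; apply: eq_bigr => l _; rewrite mulr_sumr.
  by apply: eq_bigr => j _; rewrite mulrCA mulrA.
Qed.

Definition ideal_add I J y := exists u v, [/\ I u, J v & y = u + v].

Definition principal_ideal (x y : R) := exists r, y = x * r.

Lemma is_ideal_add I J : is_ideal I -> is_ideal J -> is_ideal (ideal_add I J).
Proof.
move=> hI hJ; split; first by exists 0, 0; rewrite addr0; split => //; apply: ideal0.
- move=> _ _ [u1 [v1 [hu1 hv1 ->]]] [u2 [v2 [hu2 hv2 ->]]].
  by exists (u1 + u2), (v1 + v2); split; [apply: idealD | apply: idealD | rewrite addrACA].
- move=> r _ [u [v [hu hv ->]]].
  by exists (r * u), (r * v); split; [apply: idealMl | apply: idealMl | rewrite mulrDr].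
Qed.

Lemma ideal_add_subl I J y : is_ideal J -> I y -> ideal_add I J y.
Proof. by move=> hJ hy; exists y, 0; split; rewrite ?addr0 //; apply: ideal0. Qed.

Lemma ideal_add_subr I J y : is_ideal I -> J y -> ideal_add I J y.
Proof. by move=> hI hy; exists 0, y; split; rewrite ?add0r //; apply: ideal0. Qed.

Lemma is_principal_ideal x : is_ideal (principal_ideal x).
Proof.
split; first by exists 0; rewrite mulr0.
- by move=> _ _ [r ->] [r' ->]; exists (r + r'); rewrite mulrDr.
- by move=> r _ [r' ->]; exists (r * r'); rewrite mulrCA.
Qed.

Lemma noetherian_chain (ch : nat -> R -> Prop) : noetherian R ->
  (forall n, is_ideal (ch n)) -> (forall n x, ch n x -> ch n.+1 x) ->
  exists N, forall m x, ch m x -> ch N x.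
Proof.
move=> noeth ideal_ch ch_mono.
have ch_le m n x : (m <= n)%N -> ch m x -> ch n x.
  by move/subnK <-; elim: (n - m)%N => // d IH /IH; apply: ch_mono.
pose U x := exists n, ch n x.
have ideal_U : is_ideal U.
  split; first by exists 0%N; apply: ideal0.
  - move=> x y [m hx] [n hy]; exists (maxn m n).
    by apply: idealD => //; apply: ch_le hx || apply: ch_le hy; rewrite ?leq_maxl ?leq_maxr.
  - by move=> r x [n hx]; exists n; apply: idealMl.
have [s gen_U] := noeth U ideal_U.
have /choice[n hn] : forall i : 'I_(size s), exists n, ch n s`_i.
  by move=> i; apply/gen_U/in_ideal_gen_nth.
exists (\max_i n i) => m x hx; apply: in_ideal_gen_sub (ideal_ch _) _ _.
- by move=> i; apply: ch_le (hn i); apply: leq_bigmax.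
- by apply/gen_U; exists m.
Qed.

Lemma noetherian_maximal (F : (R -> Prop) -> Prop) c0 : noetherian R ->
  (forall c, F c -> is_ideal c) -> F c0 ->
  exists2 c, F c & forall d, F d -> (forall x, c x -> d x) -> forall x, d x -> c x.
Proof.
move=> noeth ideal_F F_c0; apply: NNPP => no_max.
pose S := {c | F c}.
have /choice[g hg] : forall c : S, exists d : S,
    (forall x, sval c x -> sval d x) /\ ~ (forall x, sval d x -> sval c x).
  move=> [c Fc]; apply: NNPP => c_max; apply: no_max; exists c => // d Fd cd.
  by apply: NNPP => dc; apply: c_max; exists (exist _ d Fd).
pose ch n := sval (iter n g (exist _ c0 F_c0)).
have [N chN] : exists N, forall m x, ch m x -> ch N x.
  apply: noetherian_chain => // [n | n x]; first by apply: ideal_F; apply: svalP.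
  by rewrite /ch iterS; apply: (proj1 (hg _)).
by apply: (proj2 (hg (iter N g (exist _ c0 F_c0)))) => x; apply: (chN N.+1).
Qed.

(* Noetherianity stands in for Zorn's lemma. *)
Lemma maximal_ideal_above I : noetherian R -> Defs.proper_ideal I ->
  exists2 m, maximal_ideal m & forall x, I x -> m x.
Proof.
move=> noeth pI.
have [m [pm Im] m_max] := @noetherian_maximal
  (fun J => Defs.proper_ideal J /\ forall x, I x -> J x) I noeth
  (fun c h => proj1 (proj1 h)) (conj pI (fun x h => h)).
exists m => //; split => // J pJ mJ.
by apply: m_max => //=; split => // x /Im /mJ.
Qed.

Lemma jacobson_unit (x : R) : noetherian R -> jacobson_radical x -> exists v, (1 + x) * v = 1.
Proof.
move=> noeth jac_x.
have [[v v1] | proper] := classic (principal_ideal (1 + x) 1); first by exists v; rewrite -v1.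
have [m max_m Im] := maximal_ideal_above noeth (conj (is_principal_ideal _) proper).
have [[ideal_m m_ne1] _] := max_m; case: m_ne1; rewrite -(addrK x 1).
by apply: idealB => //; [apply: Im; exists 1; rewrite mulr1 | apply: jac_x].
Qed.

Lemma det_one_sub_congr a k (B : 'M[R]_k) : is_ideal a ->
  (forall i j, a (B i j)) -> a (\det (1%:M - B) - 1).
Proof.
move=> ideal_a aB; rewrite /determinant (bigD1 (1%g : 'S_k)) //= odd_perm1 expr0 mul1r.
rewrite addrAC; apply: idealD => //.
- apply: (big_ind (fun x => a (x - 1))); first by rewrite subrr; apply: ideal0.
  + move=> x y ax ay.
    have -> : x * y - 1 = x * (y - 1) + (x - 1) by rewrite mulrBr mulr1 addrA subrK.
    by apply: idealD => //; apply: idealMl.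
  + by move=> i _; rewrite perm1 !mxE eqxx mulr1n addrAC subrr add0r; apply: idealN.
- apply: ideal_sum => // s s_ne1.
  have [i si] : exists i, s i != i.
    apply: NNPP => s_id; move/eqP: s_ne1; apply; apply/permP => i; rewrite perm1.
    by apply/eqP; apply: NNPP => sii; apply: s_id; exists i; apply/negP.
  apply: idealMl => //; rewrite (bigD1 i) //=; apply: idealMr => //.
  by rewrite !mxE eq_sym (negbTE si) mulr0n sub0r; apply: idealN.
Qed.

Lemma det_one_sub_unit a k (B : 'M[R]_k) : noetherian R -> is_ideal a ->
  (forall x, a x -> jacobson_radical x) -> (forall i j, a (B i j)) ->
  exists v, \det (1%:M - B) * v = 1.
Proof.
move=> noeth ideal_a a_jac aB.
have [v] := jacobson_unit noeth (a_jac _ (det_one_sub_congr ideal_a aB)).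
by rewrite addrC subrK; exists v.
Qed.

Lemma mx_solve_mod J k (A : 'M[R]_k) (G r : 'cV[R]_k) v : is_ideal J ->
  \det A * v = 1 -> (forall i, J ((A *m G - r) i 0)) ->
  forall i, J (G i 0 - v * (\adj A *m r) i 0).
Proof.
move=> ideal_J detAv AGr i.
have -> : G i 0 - v * (\adj A *m r) i 0 = v * (\adj A *m (A *m G - r)) i 0.
  rewrite mulmxBr mulmxA mul_adj_mx mul_scalar_mx !mxE mulrBr.
  by rewrite mulrA (mulrC v (\det A)) detAv mul1r.
by apply: idealMl => //; rewrite mxE; apply: ideal_sum => // j _; apply: idealMl.
Qed.

Lemma nakayama a M t : noetherian R -> is_ideal a ->
  (forall x, a x -> jacobson_radical x) -> (forall z, M z <-> in_ideal_gen t z) ->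
  (forall y, M y -> ideal_mul a M y) -> forall y, M y -> y = 0.
Proof.
move=> noeth ideal_a a_jac gen_M M_aM.
have /choice[W hW] : forall i : 'I_(size t), exists w : 'I_(size t) -> R,
    (forall l, a (w l)) /\ t`_i = \sum_(l < size t) t`_l * w l.
  move=> i; apply: (ideal_mul_genl gen_M ideal_a); apply/ideal_mulC/M_aM.
  by apply/gen_M/in_ideal_gen_nth.
pose B : 'M[R]_(size t) := \matrix_(i, l) W i l.
pose T : 'cV[R]_(size t) := \col_i t`_i.
have [v detv] : exists v, \det (1%:M - B) * v = 1.
  by apply: det_one_sub_unit noeth ideal_a a_jac _ => i l; rewrite mxE; case: (hW i).
have ideal_0 : is_ideal (fun z : R => z = 0).
  by split => // [x y -> ->|r x ->]; rewrite ?addr0 ?mulr0.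
have T0 (i : 'I_(size t)) : t`_i = 0.
  have BT_T j : ((1%:M - B) *m T - 0) j 0 = 0.
    rewrite subr0 mulmxBl mul1mx !mxE {1}(proj2 (hW j)); apply/eqP; rewrite subr_eq0.
    by apply/eqP/eq_bigr => l _; rewrite !mxE mulrC.
  by have := mx_solve_mod ideal_0 detv BT_T i; rewrite mulmx0 !mxE mulr0 subr0.
by move=> y /gen_M [c ->]; rewrite big1 // => i _; rewrite T0 mulr0.
Qed.

Lemma ideal_pow_sub_add x I I' n j y : is_ideal I' ->
  (forall z, I z -> ideal_add (principal_ideal x) I' z) -> (j <= n)%N ->
  ideal_pow I n y -> ideal_add (principal_ideal (x ^+ j)) (ideal_pow I' (n - j)) y.
Proof.
move=> ideal_I' I_sub; have ideal_pow_I' m := is_ideal_pow m ideal_I'.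
have ideal_add_pow j' m := is_ideal_add (is_principal_ideal (x ^+ j')) (ideal_pow_I' m).
have add_pow0 m z : ideal_add (principal_ideal (x ^+ 0)) (ideal_pow I' m) z.
  by apply: ideal_add_subl => //; exists z; rewrite expr0 mul1r.
elim: n j y => [|n IH] [|j] y; rewrite ?ltn0 //; try by move=> _ _; apply: add_pow0.
rewrite ltnS subSS => le_jn [k [u [v [Iu In_v ->]]]].
apply: ideal_sum => // i _.
have [_ [z [[r ->] I'z ->]]] := I_sub _ (Iu i); rewrite mulrDl.
apply: idealD => //.
- have [_ [z' [[r' ->] I'z' ->]]] := IH j _ le_jn (In_v i).
  rewrite mulrDr; apply: idealD => //.
  + by apply: ideal_add_subl; last by exists (r * r'); rewrite exprS mulrACA.
  + by apply: ideal_add_subr; [apply: is_principal_ideal | apply: idealMl].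
case E: (n - j)%N => [|m]; first by apply: ideal_add_subr; first apply: is_principal_ideal.
have lt_jn : (j < n)%N by rewrite -subn_gt0 E.
have [_ [z2 [[r2 ->] I'z2 ->]]] := IH j.+1 _ lt_jn (In_v i).
rewrite mulrDr; apply: idealD => //.
- by apply: ideal_add_subl; last by exists (z * r2); rewrite mulrCA.
- apply: ideal_add_subr; first by apply: is_principal_ideal.
  by apply: ideal_mul_mem; rewrite // -[m]/(m.+1.-1) -E -subnS.
Qed.

Lemma gen_pow_sub s I c : is_ideal c -> (forall y, I y <-> in_ideal_gen s y) ->
  (forall i : 'I_(size s), exists k, c (s`_i ^+ k)) ->
  exists N, forall y, ideal_pow I N y -> c y.
Proof.
elim: s I => [|x s IH] I ideal_c gen_I pow_c.
  exists 1%N => y /= /(ideal_mul_subl (is_ideal_ext gen_I (is_ideal_gen _))) /gen_I [cf ->].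
  by rewrite big_ord0; apply: ideal0.
have [N IsN_c] := IH (in_ideal_gen s) ideal_c (fun y => conj id id)
  (fun i => pow_c (lift ord0 i)).
have [k xk_c] := pow_c ord0.
exists (k + N)%N => y Iy.
have I_sub z : I z -> ideal_add (principal_ideal x) (in_ideal_gen s) z.
  move=> /gen_I [cf ->]; rewrite big_ord_recl.
  exists (cf ord0 * x), (\sum_(i < size s) cf (lift ord0 i) * s`_i).
  by split => //; [exists (cf ord0); rewrite mulrC | exists (fun i => cf (lift ord0 i))].
have [_ [z [[r ->] sz ->]]] := ideal_pow_sub_add (is_ideal_gen s) I_sub (leq_addr N k) Iy.
by apply: idealD => //; [apply: idealMr | apply: IsN_c; rewrite addKn in sz].
Qed.

Lemma colon_pow_stable c x : noetherian R -> is_ideal c ->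
  exists k, forall y, c (x ^+ k.+1 * y) -> c (x ^+ k * y).
Proof.
move=> noeth ideal_c.
pose colon_pow J := exists j, forall y, J y <-> c (x ^+ j * y).
have ideal_colon J : colon_pow J -> is_ideal J.
  move=> [j eJ]; apply: (is_ideal_ext eJ); split; first by rewrite mulr0; apply: ideal0.
  - by move=> y1 y2 h1 h2; rewrite mulrDr; apply: idealD.
  - by move=> r y h; rewrite mulrCA; apply: idealMl.
have [J [k eJ] J_max] := @noetherian_maximal colon_pow (fun y => c (x ^+ 0 * y)) noeth
  ideal_colon (ex_intro _ 0%N (fun y => conj id id)).
exists k => y ck1y; apply/(eJ y); apply: (J_max (fun y => c (x ^+ k.+1 * y)) _ _ y ck1y).
  by exists k.+1.
by move=> z /eJ ckz; rewrite exprS -mulrA; apply: idealMl.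
Qed.

Definition adic_kernel a y := forall n, ideal_pow a n y.

Lemma is_ideal_adic_kernel a : is_ideal a -> is_ideal (adic_kernel a).
Proof.
move=> ideal_a; have ideal_pow n := is_ideal_pow n ideal_a.
split; first by move=> n; apply: ideal0.
- by move=> x y hx hy n; apply: idealD.
- by move=> r x hx n; apply: idealMl.
Qed.

Section KrullIntersection.
Variable a : R -> Prop.
Hypotheses (noeth : noetherian R) (ideal_a : is_ideal a).

Let K := adic_kernel a.
Let aK := ideal_mul a K.
Let meet_sub (c : R -> Prop) := forall y, c y -> K y -> aK y.

Let ideal_K : is_ideal K. Proof. exact: is_ideal_adic_kernel. Qed.
Let ideal_aK : is_ideal aK. Proof. exact: is_ideal_mul. Qed.

Section MaximalMeet.
Variable c : R -> Prop.
Hypotheses (ideal_c : is_ideal c) (c_meet : meet_sub c).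
Hypothesis c_max : forall d, is_ideal d -> meet_sub d ->
  (forall x, c x -> d x) -> forall x, d x -> c x.

Lemma mul_adic_kernel_sub y : aK y -> c y.
Proof.
move=> aKy; apply: (c_max (is_ideal_add ideal_c ideal_aK) _ _ (ideal_add_subr ideal_c aKy)).
- move=> _ [u [v [cu aKv ->]]] Kuv; apply: idealD => //; apply: c_meet => //.
  by rewrite -(addrK v u); apply: (idealB ideal_K) => //; apply: ideal_mul_subr ideal_K aKv.
- by move=> x; apply: ideal_add_subl.
Qed.

Lemma pow_mem_of_mem x : a x -> exists k, c (x ^+ k).
Proof.
move=> ax; have [k stable] := colon_pow_stable x noeth ideal_c.
have xk_add : ideal_add c (principal_ideal (x ^+ k)) (x ^+ k).
  by apply: ideal_add_subr => //; exists 1; rewrite mulr1.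
exists k; apply: (c_max (is_ideal_add ideal_c (is_principal_ideal (x ^+ k))) _ _ xk_add).
- move=> _ [u [_ [cu [r ->] ->]]] Ky; apply: c_meet => //.
  apply: idealD => //; apply: stable.
  have -> : x ^+ k.+1 * r = x * (u + x ^+ k * r) - x * u.
    by rewrite mulrDr addrC addKr exprS mulrA.
  by apply: idealB; [|apply: mul_adic_kernel_sub; apply: ideal_mul_mem|apply: idealMl].
- by move=> y; apply: ideal_add_subl (is_principal_ideal _).
Qed.

End MaximalMeet.

Lemma adic_kernel_sub_mul y : K y -> aK y.
Proof.
have [c [ideal_c c_meet] c_max] := @noetherian_maximal (fun c => is_ideal c /\ meet_sub c)
  aK noeth (fun c h => proj1 h) (conj ideal_aK (fun y h _ => h)).
have c_maximal d : is_ideal d -> meet_sub d -> (forall x, c x -> d x) -> forall x, d x -> c x.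
  by move=> ideal_d d_meet; apply: c_max.
have [s gen_a] := noeth ideal_a.
have [N aN_c] := gen_pow_sub ideal_c gen_a
  (fun i => pow_mem_of_mem ideal_c c_meet c_maximal (proj2 (gen_a _) (in_ideal_gen_nth i))).
by move=> Ky; apply: c_meet => //; apply: aN_c.
Qed.

Lemma krull_intersection : (forall x, a x -> jacobson_radical x) -> forall y, K y -> y = 0.
Proof.
move=> a_jac; have [t gen_K] := noeth ideal_K.
exact: nakayama noeth ideal_a a_jac gen_K adic_kernel_sub_mul.
Qed.

End KrullIntersection.

End Ideals.

Section Completion.
Variables (R : comPzRingType) (a : R -> Prop).
Hypothesis ideal_a : is_ideal a.

Let ideal_pow_a n : is_ideal (ideal_pow a n) := is_ideal_pow n ideal_a.

Lemma compat_seq_const (r : R) : compat_seq a (compl_of r).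
Proof. by move=> n; rewrite /compl_of subrr; apply: ideal0. Qed.

Lemma compl_eq_sym x y : compl_eq a x y -> compl_eq a y x.
Proof. by move=> xy n; apply: idealBC. Qed.

(* [x_n = x_1 + (x_n - x_1)], and the telescoping differences lie in [a^n = a a^(n-1)]. *)
Lemma compat_seq_decomp s x : (forall z, a z <-> in_ideal_gen s z) -> compat_seq a x ->
  exists r (z : 'I_(size s) -> nat -> R), (forall j, compat_seq a (z j)) /\
    compl_eq a x (fun n => r + \sum_(j < size s) s`_j * z j n).
Proof.
move=> gen_a compat_x.
have /choice[W hW] : forall n, exists w : 'I_(size s) -> R,
    (forall l, ideal_pow a n (w l)) /\ x n.+2 - x n.+1 = \sum_(l < size s) s`_l * w l.
  by move=> n; apply: (ideal_mul_genl gen_a (ideal_pow_a n)); apply: (compat_x n.+1).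
pose z j n := \sum_(m < n) W m j.
have zS j n : z j n.+1 = z j n + W n j by rewrite /z big_ord_recr.
have sum_z n : \sum_(j < size s) s`_j * z j n = x n.+1 - x 1%N.
  elim: n => [|n IH]; first by rewrite subrr big1 // => j _; rewrite /z big_ord0 mulr0.
  under eq_bigr => j _ do rewrite zS mulrDr.
  by rewrite big_split /= IH -(proj2 (hW n)) addrC addrA subrK.
exists (x 1%N), z; split.
- by move=> j n; rewrite zS addrAC subrr add0r; apply: (proj1 (hW n)).
- move=> n; rewrite sum_z [x 1%N + _]addrC subrK.
  exact: idealBC (ideal_pow_a n) (compat_x n).
Qed.

Hypotheses (noeth : noetherian R) (a_jac : forall x, a x -> jacobson_radical x).

Section Generators.
Variables (k : nat) (g : 'I_k -> nat -> R).
Hypothesis compat_g : forall i, compat_seq a (g i).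
Hypothesis span_g : forall x, compat_seq a x ->
  exists c : 'I_k -> R, compl_eq a x (fun n => \sum_(l < k) c l * g l n).

Lemma completion_gens_const : exists rho : 'I_k -> R,
  forall i, compl_eq a (g i) (compl_of (rho i)).
Proof.
have [s gen_a] := noeth ideal_a.
have /choice[rz hrz] : forall i, exists p : R * ('I_(size s) -> nat -> R),
    (forall j, compat_seq a (p.2 j)) /\
    compl_eq a (g i) (fun n => p.1 + \sum_(j < size s) s`_j * p.2 j n).
  by move=> i; have [r [z hz]] := compat_seq_decomp gen_a (compat_g i); exists (r, z).
have /choice[C hC] : forall ij : 'I_k * 'I_(size s), exists c : 'I_k -> R,
    compl_eq a ((rz ij.1).2 ij.2) (fun n => \sum_(l < k) c l * g l n).
  by move=> [i j]; apply: span_g; apply: (proj1 (hrz i)).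
pose B : 'M[R]_k := \matrix_(i, l) \sum_(j < size s) s`_j * C (i, j) l.
have aB i l : a (B i l).
  rewrite mxE; apply: ideal_sum => // j _; apply: idealMr => //.
  exact/gen_a/in_ideal_gen_nth.
have [v detv] := det_one_sub_unit noeth ideal_a a_jac aB.
pose r : 'cV[R]_k := \col_i (rz i).1.
exists (fun i => v * (\adj (1%:M - B) *m r) i 0) => i n.
pose G : 'cV[R]_k := \col_l g l n.
have BG_r i' : ideal_pow a n (((1%:M - B) *m G - r) i' 0).
  set zn := \sum_(j < size s) s`_j * (rz i').2 j n.
  have -> : ((1%:M - B) *m G - r) i' 0 = (g i' n - ((rz i').1 + zn)) +
      \sum_(j < size s) s`_j * ((rz i').2 j n - \sum_(l < k) C (i', j) l * g l n).
    rewrite mulmxBl mul1mx !mxE.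
    have -> : \sum_(l < k) B i' l * G l 0 =
        \sum_(j < size s) s`_j * \sum_(l < k) C (i', j) l * g l n.
      rewrite /B /G; under eq_bigr => l _ do rewrite !mxE mulr_suml.
      rewrite exchange_big /=; apply: eq_bigr => j _; rewrite mulr_sumr.
      by apply: eq_bigr => l _; rewrite mulrA.
    under [X in _ = _ + X]eq_bigr => j _ do rewrite mulrBr.
    by rewrite sumrB opprD !addrA subrK addrAC.
  apply: idealD => //; first by apply: (proj2 (hrz i')).
  by apply: ideal_sum => // j _; apply: idealMl => //; exact: (hC (i', j) n).
by have := mx_solve_mod (ideal_pow_a n) detv BG_r i; rewrite [G i 0]mxE.
Qed.

End Generators.

Lemma completion_fg_surjective : completion_fg a ->
  forall x, compat_seq a x -> exists r, compl_eq a (compl_of r) x.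
Proof.
move=> [k [g [compat_g span_g]]] x compat_x.
have [rho g_rho] := completion_gens_const compat_g span_g.
have [c x_cg] := span_g x compat_x.
exists (\sum_(i < k) c i * rho i) => n; rewrite /compl_of.
have -> : \sum_(i < k) c i * rho i - x n =
    - (x n - \sum_(i < k) c i * g i n) - \sum_(i < k) c i * (g i n - rho i).
  under [X in _ = _ - X]eq_bigr => i _ do rewrite mulrBr.
  by rewrite sumrB !opprB [RHS]addrC addrA subrK.
apply: idealB => //; first exact: idealN.
by apply: ideal_sum => // i _; apply: idealMl => //; apply: g_rho.
Qed.

End Completion.

Theorem theoremB (R : comPzRingType) (a : R -> Prop) :
  noetherian R -> is_ideal a -> (forall x, a x -> jacobson_radical x) ->
  (adically_complete a <-> completion_fg a).
Proof.
move=> noeth ideal_a a_jac; split.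
- move=> [_ onto]; exists 1%N, (fun _ => compl_of 1); split.
    by move=> _; apply: compat_seq_const.
  move=> x /onto [r rx]; exists (fun _ => r); apply: (compl_eq_sym ideal_a) => n.
  by rewrite big_ord1 /compl_of mulr1; apply: rx.
- move=> fg; split; last exact: completion_fg_surjective.
  move=> r s rs; apply/eqP; rewrite -subr_eq0; apply/eqP.
  by apply: (krull_intersection noeth ideal_a a_jac) => n; apply: rs.
Qed.
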